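(* Let $n\in\mathbb{N}$, let $\mathbf{s}=(s_0,\ldots,s_n)\subset[0,\infty)$ be strictly positive on $(0,\infty)$ and let $s_{-1}\in[0,\infty)$. Then the sequence $\mathbf{s}'=(s_{-1},s_0,\ldots,s_n)$ (viewed as a sequence of length $n+2$ with $s_{-1}$ as its zeroth term) is strictly positive on $(0,\infty)$ if and only if $s_{-1}\in(t_\infty(\mathbf{s}),\infty)$.
   Context: For $a<b$ and $\mathbf{s}=(s_0,\ldots,s_n)$ let $\sigma(x^k)=s_k$ define a linear functional on real polynomials of degree $\le n$. $\mathbf{s}$ is positive on $[a,b]$ if $\sigma(P)\ge0$ for every such $P$ nonnegative on $[a,b]$, strictly positive if moreover $\sigma(P)>0$ for every such $P\not\equiv0$. Strictly positive on $(0,\infty)$ means strictly positive on some $[a,b]\subset(0,\infty)$. $\mathcal{M}_{a,b}(\mathbf{s})$ is the set of positive Borel measures on $[a,b]$ with $k$-th moments $s_k$ ($k=0,\ldots,n$); $t_{a,b}(\mathbf{s})=\inf\{\int_{[a,b]}\frac1t\,d\mu:\mu\in\mathcal{M}_{a,b}(\mathbf{s})\}$ with $\inf\varnothing=\infty$, and $t_\infty(\mathbf{s})=\inf_{0<a<b}t_{a,b}(\mathbf{s})$. *)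

From HB Require Import structures.
From mathcomp Require Import all_boot all_order all_algebra.
From mathcomp Require Import all_classical all_reals all_analysis.
Set Implicit Arguments. Unset Strict Implicit. Unset Printing Implicit Defensive.
Import Order.TTheory GRing.Theory Num.Theory.
Local Open Scope classical_set_scope.
Local Open Scope ring_scope.

Section Defs.
Variable R : realType.

Definition sigma (s : nat -> R) (P : {poly R}) : R :=
  \sum_(k < size P) P`_k * s k.

Definition nonneg_on (P : {poly R}) (a b : R) : Prop :=
  forall x, a <= x <= b -> 0 <= P.[x].

Definition positive_on (n : nat) (s : nat -> R) (a b : R) : Prop :=
  forall P : {poly R}, (size P <= n.+1)%N -> nonneg_on P a b -> 0 <= sigma s P.

Definition strictly_positive_on (n : nat) (s : nat -> R) (a b : R) : Prop :=
  positive_on n s a b /\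
  forall P : {poly R}, (size P <= n.+1)%N -> P != 0 -> nonneg_on P a b ->
    0 < sigma s P.

(* strictly positive on (0, oo): strictly positive on some [a,b], 0 < a < b *)
Definition strictly_positive_pos (n : nat) (s : nat -> R) : Prop :=
  exists a b : R, 0 < a /\ a < b /\ strictly_positive_on n s a b.

(* M_{a,b}(s): positive Borel measures on [a,b] (represented as Borel measures
   on R concentrated on [a,b]) whose k-th moments are s_k, k = 0..n. *)
Definition moment_measures (n : nat) (s : nat -> R) (a b : R)
  : set {measure set R -> \bar R} :=
  [set mu | mu (~` `[a, b]) = 0%E /\
     forall k, (k <= n)%N ->
       (\int[mu]_(x in `[a, b]) (x ^+ k)%:E = (s k)%:E)%E].

(* t_{a,b}(s) = inf { int 1/t dmu : mu in M_{a,b}(s) }, inf of empty = +oo *)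
Definition t_ab (n : nat) (s : nat -> R) (a b : R) : \bar R :=
  ereal_inf [set (\int[mu]_(x in `[a, b]) (x^-1)%:E)%E
            | mu in moment_measures n s a b].

Definition t_inf (n : nat) (s : nat -> R) : \bar R :=
  ereal_inf [set t_ab n s ab.1 ab.2 | ab in [set ab : R * R | 0 < ab.1 /\ ab.1 < ab.2]].

Definition prepend (sm1 : R) (s : nat -> R) : nat -> R :=
  fun k => if k is k'.+1 then s k' else sm1.

End Defs.

(* Strict positivity of s on [a,b] says, dually, that every nonzero coefficient
   vector c with c.(1,x,...,x^n) >= 0 on [a,b] pairs positively with
   (s_0,...,s_n); compactness of the unit sphere reduces this to finitely many
   points x and a uniform margin eps.
   If s' = (s_{-1},s) is strictly positive on [a,b], Farkas' lemma for these
   points writes s' - eps e_0 as sum_i f_i (1,x_i,...,x_i^(n+1)) with f_i >= 0;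
   the measure sum_i f_i x_i delta_{x_i} has moments s and integrates 1/t to
   s_{-1} - eps, so t_oo(s) < s_{-1}.
   Conversely, let mu in M_{a,b}(s) integrate 1/t to t < s_{-1}, and let c be
   nonnegative on (0,B]. Looking near 0 gives c_0 >= 0. If c_0 = 0, strict
   positivity of s gives c.s' > 0; otherwise integrating c.(1,x,...,x^(n+1))/x
   against mu gives c.(t,s) >= 0, whence c.s' > 0. Compactness again yields
   finitely many points of (0,B], hence an interval [a',B] on which s' is
   strictly positive. *)

From HB Require Import structures.
From mathcomp Require Import all_boot all_order all_algebra.
From mathcomp Require Import all_classical all_reals all_analysis.
From mathcomp Require Import finmap measurable_realfun lra.
Set Implicit Arguments. Unset Strict Implicit. Unset Printing Implicit Defensive.
Import Order.TTheory GRing.Theory Num.Theory.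
Import numFieldNormedType.Exports.
Local Open Scope classical_set_scope.
Local Open Scope ring_scope.

Section RowDot.
Variables (R : comNzRingType) (N : nat).

Definition dot (u v : 'rV[R]_N) : R := \sum_(k < N) u 0 k * v 0 k.

Lemma dotC u v : dot u v = dot v u.
Proof. by apply: eq_bigr => k _; rewrite mulrC. Qed.

Lemma dot_is_linear u : linear_for *%R (dot u).
Proof.
move=> a v w; rewrite /dot mulr_sumr -big_split /=.
by apply: eq_bigr => k _; rewrite !mxE mulrDr mulrCA.
Qed.

HB.instance Definition _ u :=
  GRing.isLinear.Build R 'rV[R]_N R *%R (dot u) (dot_is_linear u).

Lemma dotZr a u v : dot u (a *: v) = a * dot u v.
Proof. exact: linearZ. Qed.

Lemma dotBr u v w : dot u (v - w) = dot u v - dot u w.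
Proof. exact: linearB. Qed.

Lemma dotZl a u v : dot (a *: u) v = a * dot u v.
Proof. by rewrite dotC dotZr dotC. Qed.

Lemma dotBl u v w : dot (u - v) w = dot u w - dot v w.
Proof. by rewrite dotC dotBr !(dotC w). Qed.

End RowDot.

Lemma dot_delta0 (R : comNzRingType) N (y : 'rV[R]_N.+1) : dot y (delta_mx 0 0) = y 0 0.
Proof.
rewrite /dot (bigD1 ord0) //= big1 => [|k /negbTE k0]; rewrite !mxE ?k0 ?mulr0 //.
by rewrite !eqxx mulr1 addr0.
Qed.

Lemma dot_self_gt0 (R : realDomainType) N (v : 'rV[R]_N) : v != 0 -> 0 < dot v v.
Proof.
move=> v0; rewrite lt_def sumr_ge0 ?andbT => [|k _]; last by rewrite -expr2 sqr_ge0.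
apply: contra v0 => /eqP /psumr_eq0P v2_0; apply/eqP/rowP => k.
by apply/eqP; rewrite mxE -sqrf_eq0 expr2 v2_0 // => i _; rewrite -expr2 sqr_ge0.
Qed.

Section Farkas.
Variables (R : realFieldType) (N : nat).
Implicit Types (g v y : 'rV[R]_N) (gs : seq 'rV[R]_N).

Definition conic_hull gs : set 'rV[R]_N :=
  [set v | exists2 f : nat -> R, (forall i, 0 <= f i) &
             v = \sum_(i < size gs) f i *: gs`_i].

Lemma conic_hull_cons g gs v lam :
  0 <= lam -> conic_hull gs (v - lam *: g) -> conic_hull (g :: gs) v.
Proof.
move=> lam0 [f f0 Hv].
exists (fun i => if i is i'.+1 then f i' else lam) => [[]|] //.
by rewrite big_ord_recl /= -Hv addrC subrK.
Qed.

Lemma dot_conic_hull_ge0 y gs v : (forall g, g \in gs -> 0 <= dot y g) ->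
  conic_hull gs v -> 0 <= dot y v.
Proof.
move=> ygs [f f0 ->]; rewrite linear_sum sumr_ge0 // => i _.
by rewrite linearZ mulr_ge0 ?ygs ?mem_nth.
Qed.

(* Induction on gs: when the functional y separating v from the tail has
   y.g < 0, project along g onto ker y and recurse; both outcomes lift back. *)
Lemma farkas gs v : conic_hull gs v \/
  exists2 y, (forall g, g \in gs -> 0 <= dot y g) & dot y v < 0.
Proof.
move: {2}(size gs) (erefl (size gs)) => r; elim: r gs v => [|r IH] [|g gs] //= v.
  have [->|v0] := eqVneq v 0; first by left; exists (fun=> 0); rewrite ?big_ord0.
  by right; exists (- v) => //; rewrite dotC linearN oppr_lt0 dot_self_gt0.
case=> sz; have [Hv|[y ygs yv]] := IH gs v sz.
  by left; apply: (conic_hull_cons (lexx 0)); rewrite scale0r subr0.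
have [yg0|yg_lt0] := leP 0 (dot y g).
  by right; exists y => // h; rewrite inE => /predU1P[->|/ygs].
have yg_neq0 : dot y g != 0 by rewrite lt_eqF.
pose proj h := h - (dot y h / dot y g) *: g.
have := IH (map proj gs) (proj v); rewrite size_map => /(_ sz).
case=> [[f f0 Hv]|[z zgs zv]].
  left; set w := \sum_(i < size gs) f i *: gs`_i.
  have proj_w : proj w = \sum_(i < size gs) f i *: proj gs`_i.
    rewrite /proj linear_sum /= mulr_suml scaler_suml -sumrB.
    by apply: eq_bigr => i _; rewrite [dot y _]linearZ /= scalerBr scalerA mulrA.
  have vw : v - w = (dot y (v - w) / dot y g) *: g.
    move: Hv; rewrite size_map.
    under eq_bigr do rewrite (nth_map 0) //.
    rewrite -proj_w /proj linearB /= mulrBl scalerBl.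
    set p := (_ / _) *: g; set q := (_ / _) *: g => E.
    by rewrite -[v](subrK p) E addrAC (addrAC w) subrr add0r addrC.
  apply: (conic_hull_cons (lam := dot y (v - w) / dot y g)).
    rewrite ler_ndivlMr // mul0r linearB subr_le0 ltW //.
    by apply: lt_le_trans yv _; apply: dot_conic_hull_ge0 ygs _; exists f.
  by rewrite -vw opprB addrC subrK; exists f.
have dot_proj h : dot (z - (dot z g / dot y g) *: y) h = dot z (proj h).
  rewrite dotBl dotZl /proj dotBr dotZr.
  by rewrite mulrAC (mulrAC (dot y h)) (mulrC (dot z g)).
right; exists (z - (dot z g / dot y g) *: y); last by rewrite dot_proj.
move=> h; rewrite inE dot_proj => /predU1P[->|hgs].
  by rewrite /proj divff // scale1r subrr linear0.
by apply: zgs; apply: map_f.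
Qed.
End Farkas.

Section UnitSphere.
Variable R : realType.

Lemma dot_continuous N (g : 'rV[R]_N) : continuous (fun c : 'rV[R]_N => dot c g).
Proof.
move=> c; rewrite /dot; elim: (index_enum _) => [|k r IH].
  by under eq_fun do rewrite big_nil; exact: cst_continuous.
under eq_fun do rewrite big_cons.
by apply: continuousD IH; apply: continuousZr_tmp; exact: coord_continuous.
Qed.

Lemma closed_dot_le N (g : 'rV[R]_N) r : closed [set c : 'rV[R]_N | dot c g <= r].
Proof. exact: (continuous_closedP _).1 (@dot_continuous N g) _ (@closed_le _ r). Qed.

Lemma closed_dot_ge N (g : 'rV[R]_N) r : closed [set c : 'rV[R]_N | r <= dot c g].
Proof. exact: (continuous_closedP _).1 (@dot_continuous N g) _ (@closed_ge _ r). Qed.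

Lemma coord_le_norm N (c : 'rV[R]_N) k : `|c 0 k| <= `|c|.
Proof.
rewrite [leRHS]/Num.norm /= mx_normrE; apply/bigmax_geP; right.
by exists (ord0, k); rewrite ?mem_index_enum.
Qed.

Lemma normalize_norm N (c : 'rV[R]_N) : c != 0 -> `| `|c|^-1 *: c | = 1.
Proof. by move=> c0; rewrite normrZ normfV normr_id mulVf ?normr_eq0. Qed.

Lemma norm1_neq0 N (c : 'rV[R]_N) : `|c| = 1 -> c != 0.
Proof. by move=> c1; rewrite -normr_eq0 c1 oner_eq0. Qed.

Lemma unit_sphere_compact N : compact [set c : 'rV[R]_N | `|c| = 1].
Proof.
apply: bounded_closed_compact.
  by exists 1; split => // M M1 c /= ->; exact: ltW.
have := @norm_continuous _ 'rV[R]_N.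
by move/continuous_closedP => /(_ [set 1]); apply; exact: closed_eq.
Qed.

Lemma unit_sphere_finite_subfamily N (I : choiceType) (D : set I)
    (F : I -> set 'rV[R]_N.+1) :
  (forall i, D i -> closed (F i)) ->
  (forall c, `|c| = 1 -> exists2 i, D i & ~ F i c) ->
  exists2 D' : {fset I}, {subset D' <= D} &
    forall c, `|c| = 1 -> exists2 i, i \in D' & ~ F i c.
Proof.
move=> Fcl DF; apply: contrapT => noD'.
have [e e1] : exists e : 'rV[R]_N.+1, `|e| = 1.
  pose e : 'rV[R]_N.+1 := const_mx 1; exists (`|e|^-1 *: e); apply: normalize_norm.
  by apply/eqP => /rowP /(_ ord0) /eqP; rewrite !mxE oner_eq0.
have [i0 Di0 _] := DF e e1.
have := @unit_sphere_compact N.+1; rewrite compact_In0 => /(_ I D).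
case/(_ (fun i => [set c | `|c| = 1] `&` F i)).
- by exists F.
- move=> D' sD'; apply: contrapT => empty; apply: noD'; exists D' => // c c1.
  apply: contrapT => cF; apply: empty; exists c => i iD'; split => //.
  by apply: contrapT => nF; apply: cF; exists i.
- move=> c Fc; have [c1 _] := Fc i0 Di0; have [i Di] := DF c c1.
  by case; case: (Fc i Di).
Qed.
End UnitSphere.

Lemma seq_pos_lower_bound (R : realDomainType) (xs : seq R) (B : R) :
  0 < B -> (forall x, x \in xs -> 0 < x) ->
  exists2 m, 0 < m <= B & forall x, x \in xs -> m <= x.
Proof.
move=> B0; elim: xs => [|y xs IH] xs_pos; first by exists B; rewrite ?B0 ?lexx.
have [|m /andP[m0 mB] mxs] := IH; first by move=> x xs_x; rewrite xs_pos // inE xs_x orbT.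
exists (Num.min y m); first by rewrite lt_min m0 xs_pos ?mem_head //= ge_min mB orbT.
by move=> x; rewrite inE ge_min => /predU1P[->|/mxs ->]; rewrite ?lexx ?orbT.
Qed.

Section DualCone.
Variable R : realType.

Definition dual_gt N (T : Type) (S : set T) (g : T -> 'rV[R]_N) u (eps : R) :=
  forall c, `|c| = 1 -> (forall t, S t -> 0 <= dot c (g t)) -> eps < dot c u.

Lemma dual_gt_sub N T (S S' : set T) (g : T -> 'rV[R]_N) u eps eps' :
  S `<=` S' -> eps' <= eps -> dual_gt S g u eps -> dual_gt S' g u eps'.
Proof.
move=> SS' eps_le Su c c1 cS'; apply: le_lt_trans eps_le _.
by apply: Su => // t /SS'; apply: cS'.
Qed.

Lemma dual_gt_finite N (T : choiceType) (S : set T) (g : T -> 'rV[R]_N.+1) u :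
  dual_gt S g u 0 -> exists2 eps, 0 < eps &
    exists2 ts : seq T, (forall t, t \in ts -> S t) & dual_gt [set t | t \in ts] g u eps.
Proof.
move=> Su.
(* One closed condition c.(g t) >= 0 per point t of S, and c.u <= e per e > 0. *)
pose D : set (T + R) := fun i => match i with inl t => S t | inr e => 0 < e end.
pose F i : set 'rV[R]_N.+1 := match i with
  | inl t => [set c | 0 <= dot c (g t)]
  | inr e => [set c | dot c u <= e] end.
have [|c c1|D' D'D D'F] := @unit_sphere_finite_subfamily R N _ D F.
- by case=> [t|e] _; [exact: closed_dot_ge | exact: closed_dot_le].
- have [cS|/existsNP[t /not_implyP[St ct]]] := pselect (forall t, S t -> 0 <= dot c (g t)).
    have cu := Su c c1 cS; exists (inr (dot c u / 2)) => /=; lra.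
  by exists (inl t).
pose ts := pmap (fun i => if i is inl t then Some t else None) D'.
pose es := pmap (fun i => if i is inr e then Some e else None) D'.
have [|eps /andP[eps0 _] eps_es] := @seq_pos_lower_bound _ es 1 ltr01.
  by move=> e; rewrite mem_pmap => /mapP[[//|e'] /D'D/set_mem + [->]].
exists eps => //; exists ts => [t|c c1 cts].
  by rewrite mem_pmap => /mapP[[t'|//] /D'D/set_mem + [->]].
have [[t|e] iD' /= nF] := D'F c c1.
  by exfalso; apply/nF/cts; rewrite /= mem_pmap; apply/mapP; exists (inl t).
apply: le_lt_trans (eps_es e _) _; last by rewrite ltNge; apply/negP.
by rewrite mem_pmap; apply/mapP; exists (inr e).
Qed.

Lemma dual_gt_conic_hull N (T : eqType) (ts : seq T) (g : T -> 'rV[R]_N.+1) u eps :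
  0 <= eps -> dual_gt [set t | t \in ts] g u eps ->
  conic_hull (map g ts) (u - eps *: delta_mx 0 0).
Proof.
move=> eps0 tsu; have [//|[y yg]] := farkas (map g ts) (u - eps *: delta_mx 0 0).
rewrite dotBr dotZr dot_delta0 subr_lt0 => yu.
have y0 : y != 0 by apply: contraTneq yu => ->; rewrite mxE dotC linear0 mulr0 ltxx.
have : eps < dot (`|y|^-1 *: y) u.
  by apply: tsu (normalize_norm y0) _ => t tts; rewrite dotZl mulr_ge0 ?invr_ge0 ?yg ?map_f.
rewrite dotZl ltNge => /negP[].
rewrite ler_pdivrMl ?normr_gt0 // (le_trans (ltW yu)) // mulrC ler_wpM2r //.
exact: le_trans (ler_norm _) (coord_le_norm _ _).
Qed.
End DualCone.

Section MomentRows.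
Variable R : realType.

Definition pow_row N (x : R) : 'rV[R]_N := \row_(k < N) x ^+ k.
Definition seq_row N (u : nat -> R) : 'rV[R]_N := \row_(k < N) u k.

Lemma horner_dot N (P : {poly R}) x :
  (size P <= N)%N -> P.[x] = dot (poly_rV P) (pow_row N x).
Proof.
by move=> sP; rewrite (horner_coef_wide x sP); apply: eq_bigr => k _; rewrite !mxE.
Qed.

Lemma sigma_dot N u (P : {poly R}) :
  (size P <= N)%N -> sigma u P = dot (poly_rV P) (seq_row N u).
Proof.
move=> sP; rewrite /sigma (big_ord_widen N (fun k => P`_k * u k) sP) big_mkcond.
by apply: eq_bigr => k _; rewrite !mxE; case: ltnP => // /(nth_default 0) ->; rewrite mul0r.
Qed.

Lemma poly_rV_eq0 N (P : {poly R}) :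
  (size P <= N)%N -> (poly_rV P == 0 :> 'rV_N) = (P == 0).
Proof.
move=> sP; apply/eqP/eqP => [P0|->]; last exact: linear0.
by rewrite -(poly_rV_K sP) P0 linear0.
Qed.

Lemma strictly_positive_on_dot m u a b (c : 'rV[R]_m.+1) :
  strictly_positive_on m u a b -> c != 0 ->
  (forall x, a <= x <= b -> 0 <= dot c (pow_row m.+1 x)) ->
  0 < dot c (seq_row m.+1 u).
Proof.
case=> _ u_pos c0 c_ab; have sP : (size (rVpoly c) <= m.+1)%N := size_poly _ _.
rewrite -[c]rVpolyK -sigma_dot //; apply: u_pos => // [|x xab].
  by rewrite -(poly_rV_eq0 sP) rVpolyK.
by rewrite (horner_dot x sP) rVpolyK; apply: c_ab.
Qed.

Lemma strictly_positive_on_dual m u a b :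
  dual_gt [set x | a <= x <= b] (pow_row m.+1) (seq_row m.+1 u) 0 ->
  strictly_positive_on m u a b.
Proof.
move=> u_dual.
have u_pos (P : {poly R}) : (size P <= m.+1)%N -> P != 0 -> nonneg_on P a b -> 0 < sigma u P.
  move=> sP P0 P_ab; rewrite (sigma_dot _ sP).
  have c0 : poly_rV P != 0 :> 'rV_m.+1 by rewrite poly_rV_eq0.
  have := u_dual _ (normalize_norm c0); rewrite dotZl pmulr_rgt0 ?invr_gt0 ?normr_gt0 //.
  by apply=> x xab; rewrite dotZl mulr_ge0 ?invr_ge0 // -horner_dot //; apply: P_ab.
split => // P sP P_ab; have [->|P0] := eqVneq P 0.
  by rewrite /sigma size_poly0 big_ord0.
exact/ltW/u_pos.
Qed.

Lemma dot_pow_row_S N (c : 'rV[R]_N.+1) x :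
  dot c (pow_row N.+1 x) = c 0 0 + x * dot (col' 0 c) (pow_row N x).
Proof.
rewrite /dot big_ord_recl !mxE expr0 mulr1 mulr_sumr; congr (_ + _).
by apply: eq_bigr => k _; rewrite !mxE exprS mulrCA.
Qed.

Lemma dot_seq_row_prepend N (c : 'rV[R]_N.+1) r u :
  dot c (seq_row N.+1 (prepend r u)) = c 0 0 * r + dot (col' 0 c) (seq_row N u).
Proof.
by rewrite /dot big_ord_recl !mxE; congr (_ + _); apply: eq_bigr => k _; rewrite !mxE.
Qed.

End MomentRows.

Section AtomicMeasure.
Variable R : realType.

Definition atomic_measure (w : nat -> R) (xs : seq R) : {measure set R -> \bar R} :=
  msum (fun i => mscale `|w i|%:nng \d_(xs`_i)) (size xs).

Local Open Scope ereal_scope.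

Lemma atomic_measure_setC w xs (D : set R) :
  (forall i, (i < size xs)%N -> D xs`_i) -> atomic_measure w xs (~` D) = 0.
Proof.
move=> xsD; rewrite /atomic_measure /= /msum big1 // => i _ /=.
by rewrite /mscale /= diracE memNset ?mule0 // => /(_ (xsD _ (ltn_ord i))).
Qed.

Lemma integral_atomic_measure w xs (D : set R) (h : R -> \bar R) :
  measurable D -> (forall i, (i < size xs)%N -> D xs`_i) ->
  measurable_fun D h -> (forall x, D x -> 0 <= h x) ->
  \int[atomic_measure w xs]_(x in D) h x = \sum_(i < size xs) (`|w i|%R)%:E * h xs`_i.
Proof.
move=> mD xsD mh h0; rewrite ge0_integral_measure_sum //; apply: eq_bigr => i _.
by rewrite ge0_integral_mscale // integral_dirac // diracE mem_set ?mul1e //; apply: xsD.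
Qed.

End AtomicMeasure.

Lemma measurable_inv_itv (R : realType) (a b : R) :
  0 < a -> measurable_fun `[a, b] (fun x : R => x^-1).
Proof.
move=> a0; have ab_pos : `[a, b] `<=` `]0, +oo[.
  by move=> x /=; rewrite !in_itv /= andbT => /andP[/(lt_le_trans a0)].
apply: measurable_funS ab_pos _ => //; apply: open_continuous_measurable_fun.
  exact: interval_open.
by move=> x; rewrite in_setE /= in_itv /= andbT => x0; apply: inv_continuous; rewrite gt_eqF.
Qed.

Section AtomicRepresentation.
Variable R : realType.

Lemma t_ab_le_conic n s (r a b : R) (xs : seq R) : 0 < a ->
  (forall x, x \in xs -> a <= x <= b) ->
  conic_hull (map (pow_row n.+2) xs) (seq_row n.+2 (prepend r s)) ->
  (t_ab n s a b <= r%:E)%E.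
Proof.
move=> a0 xs_ab [f f0 Hf].
have itv_pos x : `[a, b]%classic x -> 0 < x.
  by rewrite /= in_itv /= => /andP[/(lt_le_trans a0)].
have xs_itv i : (i < size xs)%N -> `[a, b]%classic xs`_i.
  by move=> ixs; rewrite /= in_itv /= xs_ab ?mem_nth.
have xs_pos i : (i < size xs)%N -> 0 < xs`_i by move/xs_itv/itv_pos.
have r_s k : (k < n.+2)%N -> prepend r s k = \sum_(i < size xs) f i * xs`_i ^+ k.
  move=> kn; have := congr1 (fun M : 'rV_n.+2 => M 0 (Ordinal kn)) Hf.
  rewrite !mxE summxE size_map => ->; apply: eq_bigr => i _.
  by rewrite (nth_map 0) // !mxE.
(* Weights f_i x_i turn x^k into f_i x_i^(k+1) and 1/x into f_i. *)
pose mu := atomic_measure (fun i => f i * xs`_i) xs.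
have w_pos i : (i < size xs)%N -> `|f i * xs`_i| = f i * xs`_i.
  by move=> ixs; rewrite ger0_norm // mulr_ge0 // ltW // xs_pos.
have mu_mom : moment_measures n s a b mu.
  split=> [|k kn]; first exact: atomic_measure_setC.
  rewrite integral_atomic_measure //; last 2 first.
  - by apply/measurable_EFinP; exact: exprn_measurable.
  - by move=> x /itv_pos/ltW x0; rewrite lee_fin exprn_ge0.
  rewrite -[s k]/(prepend r s k.+1) r_s // -sumEFin; apply: eq_bigr => i _.
  by rewrite w_pos // -EFinM exprS mulrA.
have mu_inv : (\int[mu]_(x in `[a, b]) (x^-1)%:E = r%:E)%E.
  rewrite integral_atomic_measure //; last 2 first.
  - by apply/measurable_EFinP; exact: measurable_inv_itv.
  - by move=> x /itv_pos/ltW x0; rewrite lee_fin invr_ge0.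
  rewrite -[r]/(prepend r s 0) r_s // -sumEFin; apply: eq_bigr => i _.
  by rewrite w_pos // -EFinM -mulrA divff ?gt_eqF ?xs_pos // expr0.
by rewrite -mu_inv; apply: ereal_inf_lbound; exists mu.
Qed.

Lemma t_inf_le n s (a b : R) : 0 < a < b -> (t_inf n s <= t_ab n s a b)%E.
Proof. by case/andP=> a0 ab; apply: ereal_inf_lbound; exists (a, b). Qed.

Lemma t_inf_lt_of_prepend n s (r : R) :
  strictly_positive_pos n.+1 (prepend r s) -> (t_inf n s < r%:E)%E.
Proof.
case=> a [b [a0 [ab s'_pos]]].
have s'_dual : dual_gt [set x | a <= x <= b] (pow_row n.+2) (seq_row n.+2 (prepend r s)) 0.
  by move=> c c1 c_ab; apply: strictly_positive_on_dot s'_pos (norm1_neq0 c1) c_ab.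
have [eps eps0 [xs xs_ab /(dual_gt_conic_hull (ltW eps0))]] := dual_gt_finite s'_dual.
have -> : seq_row n.+2 (prepend r s) - eps *: delta_mx 0 0 =
          seq_row n.+2 (prepend (r - eps) s).
  by apply/rowP => -[[|k] kn]; rewrite !mxE /= ?mulr1 ?mulr0 ?subr0.
move/(t_ab_le_conic a0 xs_ab) => t_le.
apply: le_lt_trans (le_trans (t_inf_le _ _ _) t_le) _; first by rewrite a0.
by rewrite lte_fin ltrBlDr ltrDl.
Qed.

End AtomicRepresentation.

Section IntegralDot.
Context d (T : measurableType d) (R : realType).
Variables (mu : {measure set T -> \bar R}) (D : set T) (N : nat).
Variables (F : T -> 'rV[R]_N) (m : 'rV[R]_N).
Hypotheses (mD : measurable D) (mF : forall k, measurable_fun D (fun x => F x 0 k)).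
Hypothesis F_ge0 : forall x k, D x -> 0 <= F x 0 k.
Hypothesis F_int : forall k, (\int[mu]_(x in D) (F x 0 k)%:E = (m 0 k)%:E)%E.

Let measurable_dot (c : 'rV[R]_N) : measurable_fun D (fun x => dot c (F x)).
Proof. by apply: measurable_sum => k; apply: measurable_funM. Qed.

Lemma integral_dot (c : 'rV[R]_N) : (forall k, 0 <= c 0 k) ->
  (\int[mu]_(x in D) (dot c (F x))%:E = (dot c m)%:E)%E.
Proof.
move=> c_ge0; under eq_integral do rewrite /dot -sumEFin.
rewrite ge0_integral_sum // => [|k|k x Dx]; last by rewrite lee_fin mulr_ge0 ?F_ge0.
  rewrite -sumEFin; apply: eq_bigr => k _; under eq_integral do rewrite EFinM.
  rewrite ge0_integralZl_EFin ?F_int // => [x Dx|]; first by rewrite lee_fin F_ge0.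
  exact/measurable_EFinP.
by apply/measurable_EFinP; apply: measurable_funM.
Qed.

Lemma dot_integral_ge0 (c : 'rV[R]_N) :
  (forall x, D x -> 0 <= dot c (F x)) -> 0 <= dot c m.
Proof.
(* Split c into nonnegative parts so that only integrals of nonnegative
   functions occur. *)
move=> cF; pose cp := map_mx Num.norm c; pose cn := cp - c.
have c_split : c = cp - cn by rewrite opprB addrC subrK.
have cp_ge0 k : 0 <= cp 0 k by rewrite mxE.
have cn_ge0 k : 0 <= cn 0 k by rewrite !mxE subr_ge0 ler_norm.
clearbody cp cn; rewrite c_split dotBl subr_ge0 -lee_fin -!integral_dot //.
apply: ge0_le_integral => //.
- by move=> x Dx; rewrite lee_fin sumr_ge0 // => k _; rewrite mulr_ge0 ?F_ge0.
- by apply/measurable_EFinP; exact: measurable_dot.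
- by apply/measurable_EFinP; exact: measurable_dot.
- by move=> x Dx; rewrite lee_fin -subr_ge0 -dotBl -c_split cF.
Qed.

End IntegralDot.

Lemma horner_lt0_near0 (R : realType) (P : {poly R}) (B : R) : P.[0] < 0 -> 0 < B ->
  exists2 x, 0 < x <= B & P.[x] < 0.
Proof.
move=> P0 B0.
have P_right : P.[x] @[x --> 0^'+] --> P.[0] := cvg_at_right_filter (@continuous_horner _ P 0).
have : \forall x \near 0^'+, (0 < x <= B) /\ P.[x] < 0.
  near=> x; split; last by near: x; exact: cvgr_lt P_right _ P0.
  by apply/andP; split; near: x; [exact: nbhs_right_gt | exact: nbhs_right_le].
by case/(filter_ex (F := 0^'+)) => x [? ?]; exists x.
Unshelve. all: by end_near.
Qed.

Lemma t_inf_ltP (R : realType) n s (r : R) : (t_inf n s < r%:E)%E ->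
  exists a b (mu : {measure set R -> \bar R}) t,
    [/\ 0 < a < b, moment_measures n s a b mu,
        (\int[mu]_(x in `[a, b]) (x^-1)%:E = t%:E)%E & t < r].
Proof.
case/ereal_inf_lt=> _ [[a b] /= [a0 ab] <-] /ereal_inf_lt[_ [mu mu_mom <-] mu_lt].
have : (0 <= \int[mu]_(x in `[a, b]) (x^-1)%:E)%E.
  apply: integral_ge0 => x; rewrite /= in_itv /= => /andP[/(lt_le_trans a0)/ltW x0 _].
  by rewrite lee_fin invr_ge0.
set I := (\int[mu]_(x in `[a, b]) (x^-1)%:E)%E => I_ge0.
have I_fin : I \is a fin_num by rewrite ge0_fin_numE // (lt_trans mu_lt) ?ltry.
by exists a, b, mu, (fine I); split; rewrite ?a0 ?fineK // -lte_fin fineK.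
Qed.

Section Prepend.
Variables (R : realType) (n : nat) (s : nat -> R) (r t a b B : R).
Variable mu : {measure set R -> \bar R}.
Hypotheses (a0 : 0 < a) (B0 : 0 < B) (bB : b <= B) (tr : t < r).
Hypothesis mu_mom : moment_measures n s a b mu.
Hypothesis mu_inv : (\int[mu]_(x in `[a, b]) (x^-1)%:E = t%:E)%E.

Let itv_pos x : `[a, b]%classic x -> 0 < x.
Proof. by rewrite /= in_itv /= => /andP[/(lt_le_trans a0)]. Qed.

Lemma dot_prepend_t_ge0 (c : 'rV[R]_n.+2) :
  (forall x, 0 < x <= B -> 0 <= dot c (pow_row n.+2 x)) ->
  0 <= dot c (seq_row n.+2 (prepend t s)).
Proof.
(* The moment vector of x |-> (1,x,...,x^(n+1))/x under mu is (t,s_0,...,s_n). *)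
move=> c_pos; apply: (@dot_integral_ge0 _ _ _ mu `[a, b] _ (fun x => x^-1 *: pow_row n.+2 x)).
- by [].
- move=> k; rewrite (_ : (fun x => _) = (fun x : R => x^-1 * x ^+ k)).
    by apply: measurable_funM; [exact: measurable_inv_itv | exact: exprn_measurable].
  by apply/funext => x; rewrite !mxE.
- by move=> x k /itv_pos x0; rewrite !mxE mulr_ge0 ?invr_ge0 ?exprn_ge0 ?ltW.
- move=> k; rewrite mxE; case: k => -[|k] /= kn.
    by rewrite -mu_inv; apply: eq_integral => x _; rewrite !mxE expr0 mulr1.
  have [_ <-] := mu_mom; last by rewrite -ltnS.
  by apply: eq_integral => x /set_mem/itv_pos x0; rewrite !mxE exprS mulKf ?gt_eqF.
move=> x ab_x; have x0 := itv_pos ab_x.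
rewrite dotZr mulr_ge0 ?invr_ge0 ?(ltW x0) //; apply: c_pos; rewrite x0 (le_trans _ bB) //.
by move: ab_x; rewrite /= in_itv => /andP[].
Qed.

Variables (a1 b1 : R).
Hypotheses (a10 : 0 < a1) (b1B : b1 <= B) (s_pos : strictly_positive_on n s a1 b1).

Lemma dual_gt_prepend :
  dual_gt [set x | 0 < x <= B] (pow_row n.+2) (seq_row n.+2 (prepend r s)) 0.
Proof.
move=> c c1 c_pos; have c00 : 0 <= c 0 0.
  have c_horner x : (rVpoly c).[x] = dot c (pow_row n.+2 x).
    by rewrite (horner_dot x (size_poly _ _)) rVpolyK.
  rewrite leNgt; apply/negP => c00.
  have P0 : (rVpoly c).[0] < 0 by rewrite c_horner dot_pow_row_S mul0r addr0.
  by have [x xB] := horner_lt0_near0 P0 B0; rewrite c_horner ltNge c_pos.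
rewrite dot_seq_row_prepend; move: c00; rewrite le_eqVlt => /predU1P[c00|c00].
  rewrite -c00 mul0r add0r; apply: strictly_positive_on_dot s_pos _ _.
    apply: contra (norm1_neq0 c1) => /eqP c'0; apply/eqP/rowP => k; rewrite mxE.
    case: (unliftP ord0 k) => [j ->|->] //.
    by move/rowP: c'0 => /(_ j); rewrite !mxE.
  move=> x /andP[a1x xb1]; have x0 : 0 < x := lt_le_trans a10 a1x.
  have /= := c_pos x; rewrite x0 (le_trans xb1 b1B) [dot c _]dot_pow_row_S -c00 add0r.
  by rewrite pmulr_rge0 //; apply.
have := dot_prepend_t_ge0 c_pos; rewrite dot_seq_row_prepend.
have : c 0 0 * t < c 0 0 * r by rewrite ltr_pM2l.
lra.
Qed.

End Prepend.

Lemma prepend_strictly_positive (R : realType) n s (r : R) :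
  strictly_positive_pos n s -> (t_inf n s < r%:E)%E ->
  strictly_positive_pos n.+1 (prepend r s).
Proof.
case=> a1 [b1 [a10 [_ s_pos]]] /t_inf_ltP[a [b [mu [t [/andP[a0 ab] mu_mom mu_inv tr]]]]].
pose B := Num.max b b1.
have bB : b <= B by rewrite le_max lexx.
have b1B : b1 <= B by rewrite le_max lexx orbT.
have B0 : 0 < B by rewrite (lt_le_trans _ bB) // (lt_trans a0 ab).
have := dual_gt_prepend a0 B0 bB tr mu_mom mu_inv a10 b1B s_pos.
case/dual_gt_finite => eps eps0 [xs xs_B xs_dual].
have xs_pos x : x \in xs -> 0 < x by move/xs_B; case/andP.
have B2 : 0 < B / 2 by rewrite divr_gt0.
have [a' /andP[a'0 a'B] a'_xs] := seq_pos_lower_bound B2 xs_pos.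
exists a', B; split => //; split; first lra.
apply: strictly_positive_on_dual; apply: (dual_gt_sub _ (ltW eps0) xs_dual) => x xs_x /=.
by rewrite a'_xs //; case/andP: (xs_B x xs_x).
Qed.

Theorem theorem5p4 (R : realType) (n : nat) (s : nat -> R) (sm1 : R) :
  (forall k, (k <= n)%N -> 0 <= s k) ->
  strictly_positive_pos n s ->
  0 <= sm1 ->
  (strictly_positive_pos n.+1 (prepend sm1 s) <-> (t_inf n s < sm1%:E)%E).
Proof.
move=> _ s_pos _; split; first exact: t_inf_lt_of_prepend.
exact: prepend_strictly_positive.
Qed.
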